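(* Let $v$ satisfy the standing assumptions and the doubling condition with constant $D$, and $g(x)=v(1-x^{-1})$. For an integer $n\ge1$ let $c_n=\int_{1/2}^1\frac{r^n\,dv(r)}{v(r)^2}$ (Riemann–Stieltjes integral). Then there exist constants $C$ and $n_0$, depending only on $D$, such that $c_n\le \dfrac{C}{g(n)}$ for all $n\ge n_0$.
   Context: Standing assumptions: $v:[0,1)\to[1,\infty)$ is positive, increasing, continuous, $v(0)=1$, $\lim_{r\to1}v(r)=+\infty$. Doubling condition: $v(1-d)\le D\,v(1-2d)$ for all $d\in(0,1/2]$, with $D\ge1$. *)

From Stdlib Require Import Reals Lra.
Open Scope R_scope.

Fixpoint RS_sum (f g : R -> R) (x t : nat -> R) (k : nat) : R :=
  match k with
  | O => 0
  | S k' => RS_sum f g x t k' + f (t k') * (g (x (S k')) - g (x k'))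
  end.

Definition RS_integral (f g : R -> R) (a b I : R) : Prop :=
  forall eps, 0 < eps -> exists delta, 0 < delta /\
    forall (x t : nat -> R) (k : nat),
      x O = a -> x k = b ->
      (forall i, (i < k)%nat ->
         x i < x (S i) /\ x (S i) - x i < delta /\ x i <= t i <= x (S i)) ->
      Rabs (RS_sum f g x t k - I) < eps.

Definition RS_improper (f g : R -> R) (a b L : R) : Prop :=
  (forall c, a < c < b -> exists I, RS_integral f g a c I) /\
  (forall eps, 0 < eps -> exists eta, 0 < eta /\
     forall c I, b - eta < c < b -> RS_integral f g a c I -> Rabs (I - L) < eps).

Definition standing (v : R -> R) : Prop :=
  (forall r, 0 <= r < 1 -> 1 <= v r) /\
  (forall r s, 0 <= r -> r < s -> s < 1 -> v r < v s) /\
  (forall r, 0 <= r < 1 -> forall eps, 0 < eps -> exists delta, 0 < delta /\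
     forall s, 0 <= s < 1 -> Rabs (s - r) < delta -> Rabs (v s - v r) < eps) /\
  v 0 = 1 /\
  (forall M, exists r0, 0 <= r0 < 1 /\ forall r, r0 <= r < 1 -> M < v r).

Definition doubling (v : R -> R) (D : R) : Prop :=
  forall d, 0 < d <= 1/2 -> v (1 - d) <= D * v (1 - 2 * d).

Definition gfun (v : R -> R) (x : R) : R := v (1 - / x).

Definition cn_integrand (v : R -> R) (n : nat) (r : R) : R := r ^ n / (v r) ^ 2.

From Stdlib Require Import Reals Lra Lia.
Open Scope R_scope.

(* Write c_n as the Stieltjes integral of r^n against d(-1/v).  For a step
   x < y with y - x <= 1 - y, doubling gives v y <= D v x, so the term
   x^n (v y - v x) / v(x)^2 is at most D x^n (1/v x - 1/v y).  Cut [1/2, 1) at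
   a_k = max (1/2) (1 - 2^k/n): on [a_(k+1), a_k] we have r^n <= exp (-2^k), while
   doubling along the a_k gives 1/v(a_(k+1)) <= D^(k+1)/v(a_0) = D^(k+1)/g(n).
   With an integer m >= 2D, (2D)^k exp (-2^k) <= m^m, so the k-th block is at
   most D m^m 2^-k / g(n), and summing over the blocks plus [a_0, 1) gives
   c_n <= D (1 + 2 D m^m) / g(n) for n >= 2. *)

Lemma exp_pow (x : R) (n : nat) : exp x ^ n = exp (x * INR n).
Proof.
  induction n as [|n IH].
  - simpl; now rewrite Rmult_0_r, exp_0.
  - rewrite S_INR; simpl pow; rewrite IH, <- exp_plus; f_equal; ring.
Qed.

Lemma INR_le_pow2 (n : nat) : INR n <= 2 ^ n.
Proof.
  induction n as [|n IH]; [simpl; lra|].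
  rewrite S_INR; simpl pow.
  assert (1 <= 2 ^ n) by (apply pow_R1_Rle; lra).
  lra.
Qed.

Lemma pow_one_sub_div_le_exp (x : R) (n : nat) :
  0 <= x <= INR n -> (1 - x / INR n) ^ n <= exp (- x).
Proof.
  intros Hx.
  destruct n as [|n]; [simpl in *; replace x with 0 by lra; rewrite Ropp_0, exp_0; lra|].
  assert (Hn : 0 < INR (S n)) by (apply lt_0_INR; lia).
  replace (- x) with (- (x / INR (S n)) * INR (S n)) by (field; lra).
  rewrite <- exp_pow.
  apply pow_incr; split.
  - assert (x / INR (S n) <= 1)
      by (apply (Rmult_le_reg_r (INR (S n))); [lra|]; unfold Rdiv;
          rewrite Rmult_assoc, Rinv_l; lra).
    lra.
  - pose proof (exp_ineq1_le (- (x / INR (S n)))); lra.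
Qed.

(* From [(X/m)^m <= exp X] at [X = 2^k], together with [m <= 2^m]. *)
Lemma pow_le_pow_exp_pow2 (m k : nat) :
  (1 <= m)%nat -> INR m ^ k <= INR m ^ m * exp (2 ^ k).
Proof.
  intros Hm.
  assert (Hm0 : 0 < INR m) by (apply lt_0_INR; lia).
  assert (H2k : 0 < 2 ^ k) by (apply pow_lt; lra).
  assert (Hexp : (2 ^ k / INR m) ^ m <= exp (2 ^ k)).
  { replace (exp (2 ^ k)) with (exp (2 ^ k / INR m) ^ m)
      by (rewrite exp_pow; f_equal; field; lra).
    apply pow_incr; split.
    - unfold Rdiv; apply Rmult_le_pos; [lra|left; apply Rinv_0_lt_compat; lra].
    - pose proof (exp_ineq1_le (2 ^ k / INR m)); lra. }
  assert (Hmk : INR m ^ k <= (2 ^ k) ^ m).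
  { rewrite <- pow_mult, Nat.mul_comm, pow_mult.
    apply pow_incr; split; [lra|apply INR_le_pow2]. }
  assert (Hsplit : (2 ^ k) ^ m = INR m ^ m * (2 ^ k / INR m) ^ m).
  { unfold Rdiv; rewrite Rpow_mult_distr, <- Rmult_assoc, <- Rpow_mult_distr.
    replace (INR m * 2 ^ k) with (2 ^ k * INR m) by ring.
    rewrite Rpow_mult_distr, Rmult_assoc, <- Rpow_mult_distr, Rinv_r, pow1; lra. }
  assert (0 <= INR m ^ m) by (apply pow_le; lra).
  rewrite Hsplit in Hmk.
  eapply Rle_trans; [exact Hmk|].
  apply Rmult_le_compat_l; assumption.
Qed.

Lemma RS_sum_le_telescope (f g Phi : R -> R) (x t : nat -> R) (k : nat) :
  (forall i, (i < k)%nat ->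
     f (t i) * (g (x (S i)) - g (x i)) <= Phi (x i) - Phi (x (S i))) ->
  RS_sum f g x t k <= Phi (x O) - Phi (x k).
Proof.
  induction k as [|k IH]; intros Hstep; simpl; [lra|].
  assert (IH' := IH (fun i Hi => Hstep i ltac:(lia))).
  pose proof (Hstep k (Nat.lt_succ_diag_r k)).
  lra.
Qed.

Lemma uniform_step_lt (a c eta : R) :
  a < c -> 0 < eta -> exists (N : nat) (s : R), 0 < s < eta /\ a + INR N * s = c.
Proof.
  intros Hac Heta.
  destruct (INR_archimed eta (c - a) Heta) as [N HN].
  assert (HN0 : 0 < INR N) by nra.
  exists N, ((c - a) / INR N); split; [split|].
  - apply Rdiv_lt_0_compat; lra.
  - apply (Rmult_lt_reg_r (INR N)); [lra|].
    unfold Rdiv; rewrite Rmult_assoc, Rinv_l; lra.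
  - field; lra.
Qed.

Lemma RS_integral_le_potential (f g Phi : R -> R) (a c eta I : R) :
  a < c -> 0 < eta ->
  (forall x y, a <= x -> x < y -> y <= c -> y - x < eta ->
     f x * (g y - g x) <= Phi x - Phi y) ->
  RS_integral f g a c I -> I <= Phi a - Phi c.
Proof.
  intros Hac Heta Hstep HI.
  apply Rle_plus_epsilon; intros eps Heps.
  destruct (HI eps Heps) as [delta [Hdelta Hsum]].
  destruct (uniform_step_lt a c (Rmin delta eta) Hac
              (Rmin_glb_lt _ _ _ Hdelta Heta)) as [N [s [[Hs0 Hs] HNs]]].
  pose proof (Rmin_l delta eta); pose proof (Rmin_r delta eta).
  set (x := fun i : nat => a + INR i * s).
  assert (Hpart : forall i, (i < N)%nat ->
            x i < x (S i) /\ x (S i) - x i < delta /\ x i <= x i <= x (S i)).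
  { intros i _; unfold x; rewrite S_INR; repeat split; lra. }
  assert (Hx0 : x O = a) by (unfold x; simpl; ring).
  assert (HxN : x N = c) by exact HNs.
  assert (Htel : RS_sum f g x x N <= Phi (x O) - Phi (x N)).
  { apply RS_sum_le_telescope; intros i Hi.
    assert (Hi' : INR (S i) <= INR N) by (apply le_INR; lia).
    pose proof (pos_INR i).
    unfold x in *; rewrite S_INR in *.
    apply Hstep; nra. }
  pose proof (Hsum x x N Hx0 HxN Hpart) as Habs.
  apply Rabs_def2 in Habs.
  rewrite Hx0, HxN in Htel.
  lra.
Qed.

Lemma RS_improper_le (f g : R -> R) (a b L M : R) :
  a < b -> RS_improper f g a b L ->
  (forall c I, a < c < b -> RS_integral f g a c I -> I <= M) -> L <= M.
Proof.
  intros Hab [Hex Hlim] Hbound.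
  apply Rnot_lt_le; intros HML.
  destruct (Hlim (L - M) ltac:(lra)) as [eta [Heta Hclose]].
  set (c := Rmax ((a + b) / 2) (b - eta / 2)).
  assert (Hc : a < c < b /\ b - eta < c).
  { unfold c, Rmax; destruct (Rle_dec ((a + b) / 2) (b - eta / 2)); lra. }
  destruct (Hex c ltac:(lra)) as [I HI].
  pose proof (Hbound c I ltac:(lra) HI).
  pose proof (Hclose c I ltac:(lra) HI) as Habs.
  apply Rabs_def2 in Habs.
  lra.
Qed.

Definition clamp (lo hi x : R) : R := Rmin (Rmax x lo) hi.

Lemma clamp_range (lo hi x : R) : lo <= hi -> lo <= clamp lo hi x <= hi.
Proof.
  intros. unfold clamp, Rmax, Rmin.
  destruct (Rle_dec x lo); destruct (Rle_dec _ hi); lra.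
Qed.

Lemma clamp_le_compat (lo hi x y : R) :
  lo <= hi -> x <= y -> clamp lo hi x <= clamp lo hi y.
Proof.
  intros. unfold clamp, Rmax, Rmin.
  destruct (Rle_dec x lo); destruct (Rle_dec y lo); destruct (Rle_dec lo hi);
    destruct (Rle_dec x hi); destruct (Rle_dec y hi); lra.
Qed.

Lemma clamp_above (lo hi x : R) : lo <= hi -> hi <= x -> clamp lo hi x = hi.
Proof.
  intros. unfold clamp, Rmax, Rmin.
  destruct (Rle_dec x lo); destruct (Rle_dec _ hi); lra.
Qed.

Lemma Rmax_split_clamp (h : R -> R) (lo hi x : R) :
  lo <= hi -> h (Rmax x lo) = h (Rmax x hi) + h (clamp lo hi x) - h hi.
Proof.
  intros. unfold clamp, Rmax, Rmin.
  destruct (Rle_dec x lo); destruct (Rle_dec x hi); destruct (Rle_dec lo hi);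
    try destruct (Rle_dec x hi); lra.
Qed.

(* The Stieltjes sum [sum p(x_i) (h(x_i) - h(x_(i+1)))] of a nonincreasing [h]
   is dominated by the telescoping differences of [step_majorant], which
   replaces [p] by its value at the right end of each block [[a (k+1), a k]]
   and by [1] on [[a 0, hi)]. *)
Section StepMajorant.

Variables (lo hi : R) (p h : R -> R) (a : nat -> R).

Hypothesis a_S_le : forall k, a (S k) <= a k.
Hypothesis a_range : forall k, lo <= a k < hi.
Hypothesis h_antitone : forall x y, lo <= x <= y -> y < hi -> h y <= h x.
Hypothesis p_range : forall x, lo <= x < hi -> 0 <= p x <= 1.
Hypothesis p_monotone : forall x y, lo <= x <= y -> y < hi -> p x <= p y.

Fixpoint step_majorant (K : nat) (x : R) : R :=
  match K with
  | O => h (Rmax x (a O))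
  | S K => step_majorant K x + p (a K) * (h (clamp (a (S K)) (a K) x) - h (a K))
  end.

Lemma Rmax_range (x y : R) : lo <= x < hi -> lo <= y < hi -> lo <= Rmax x y < hi.
Proof. intros. unfold Rmax; destruct (Rle_dec x y); lra. Qed.

Lemma step_majorant_increment (K : nat) (x y : R) : lo <= x <= y -> y < hi ->
  p x * (h (Rmax x (a K)) - h (Rmax y (a K))) <= step_majorant K x - step_majorant K y.
Proof.
  intros Hxy Hy.
  pose proof (p_range x ltac:(lra)) as Hpx.
  induction K as [|K IH]; simpl.
  - assert (h (Rmax y (a O)) <= h (Rmax x (a O))).
    { pose proof (a_range O).
      apply h_antitone; [split|]; unfold Rmax;
        destruct (Rle_dec x (a O)); destruct (Rle_dec y (a O)); lra. }
    nra.
  - pose proof (a_range K); pose proof (a_range (S K)); pose proof (a_S_le K).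
    rewrite (Rmax_split_clamp h (a (S K)) (a K) x), (Rmax_split_clamp h (a (S K)) (a K) y)
      by lra.
    pose proof (clamp_range (a (S K)) (a K) x ltac:(lra)).
    pose proof (clamp_range (a (S K)) (a K) y ltac:(lra)).
    set (cx := clamp (a (S K)) (a K) x) in *; set (cy := clamp (a (S K)) (a K) y) in *.
    assert (p x * (h cx - h cy) <= p (a K) * (h cx - h cy)).
    { destruct (Rle_dec (a K) x).
      - unfold cx, cy; rewrite !clamp_above by lra; lra.
      - assert (cx <= cy) by (apply clamp_le_compat; lra).
        assert (h cy <= h cx) by (apply h_antitone; lra).
        assert (p x <= p (a K)) by (apply p_monotone; lra).
        nra. }
    lra.
Qed.

Hypothesis h_nonneg : forall x, lo <= x < hi -> 0 <= h x.

Lemma step_majorant_nonneg (K : nat) (x : R) : lo <= x < hi -> 0 <= step_majorant K x.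
Proof.
  intros Hx; induction K as [|K IH]; simpl.
  - apply h_nonneg, Rmax_range; [lra|apply a_range].
  - pose proof (a_range K); pose proof (a_range (S K)); pose proof (a_S_le K).
    pose proof (clamp_range (a (S K)) (a K) x ltac:(lra)).
    pose proof (p_range (a K) ltac:(lra)).
    assert (h (a K) <= h (clamp (a (S K)) (a K) x)) by (apply h_antitone; lra).
    nra.
Qed.

Lemma step_majorant_lo_le (B : R) (K : nat) :
  (forall k, p (a k) * (h (a (S k)) - h (a k)) <= B * (1/2) ^ k) ->
  step_majorant K lo <= h (a O) + 2 * B.
Proof.
  intros Hblock.
  assert (HB : 0 <= B).
  { pose proof (a_range O); pose proof (a_range 1); pose proof (a_S_le O).
    pose proof (p_range (a O) ltac:(lra)).
    assert (h (a O) <= h (a 1%nat)) by (apply h_antitone; lra).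
    pose proof (Hblock O); simpl in *; nra. }
  assert (Hgeom : step_majorant K lo <= h (a O) + 2 * B * (1 - (1/2) ^ K)).
  { induction K as [|K IH]; simpl.
    - rewrite Rmax_right by apply a_range; lra.
    - pose proof (a_range K); pose proof (a_range (S K)); pose proof (a_S_le K).
      unfold clamp; rewrite Rmax_right, Rmin_left by lra.
      pose proof (Hblock K); lra. }
  assert (0 < (1/2) ^ K) by (apply pow_lt; lra).
  nra.
Qed.

End StepMajorant.

Definition dyadic_point (n k : nat) : R := Rmax (1/2) (1 - 2 ^ k / INR n).

Section DyadicPoints.

Variable n : nat.
Hypothesis n_pos : (1 <= n)%nat.

Let INR_n_pos : 0 < INR n.
Proof. apply lt_0_INR; lia. Qed.

Let dyadic_step_pos (k : nat) : 0 < 2 ^ k / INR n.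
Proof. apply Rdiv_lt_0_compat; [apply pow_lt|]; lra. Qed.

Lemma dyadic_point_range (k : nat) : 1/2 <= dyadic_point n k < 1.
Proof.
  pose proof (dyadic_step_pos k).
  unfold dyadic_point, Rmax; destruct (Rle_dec (1/2) (1 - 2 ^ k / INR n)); lra.
Qed.

Lemma dyadic_point_S (k : nat) :
  dyadic_point n (S k) = Rmax (1/2) (1 - 2 * (2 ^ k / INR n)).
Proof. unfold dyadic_point; simpl pow; f_equal; f_equal; field; lra. Qed.

Lemma dyadic_point_S_le (k : nat) : dyadic_point n (S k) <= dyadic_point n k.
Proof.
  pose proof (dyadic_step_pos k).
  rewrite dyadic_point_S; unfold dyadic_point, Rmax.
  destruct (Rle_dec (1/2) (1 - 2 ^ k / INR n));
    destruct (Rle_dec (1/2) (1 - 2 * (2 ^ k / INR n))); lra.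
Qed.

Lemma dyadic_point_gap (k : nat) :
  dyadic_point n k - dyadic_point n (S k) <= 1 - dyadic_point n k.
Proof.
  pose proof (dyadic_step_pos k).
  rewrite dyadic_point_S; unfold dyadic_point, Rmax.
  destruct (Rle_dec (1/2) (1 - 2 ^ k / INR n));
    destruct (Rle_dec (1/2) (1 - 2 * (2 ^ k / INR n))); lra.
Qed.

Lemma dyadic_point_n : dyadic_point n n = 1/2.
Proof.
  unfold dyadic_point; apply Rmax_left.
  assert (1 <= 2 ^ n / INR n).
  { apply (Rmult_le_reg_r (INR n)); [lra|].
    unfold Rdiv; rewrite Rmult_assoc, Rinv_l, Rmult_1_l, Rmult_1_r by lra.
    apply INR_le_pow2. }
  lra.
Qed.

End DyadicPoints.

Lemma dyadic_point_O (n : nat) : (2 <= n)%nat -> dyadic_point n 0 = 1 - / INR n.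
Proof.
  intros Hn.
  assert (Hn2 : 2 <= INR n) by (replace 2 with (INR 2) by (simpl; ring); apply le_INR; lia).
  unfold dyadic_point; simpl pow; rewrite Rmax_right.
  - field; lra.
  - assert (/ INR n <= 1/2)
      by (apply (Rmult_le_reg_r (INR n)); [lra|]; rewrite Rinv_l; lra).
    unfold Rdiv; lra.
Qed.

Section CnMajorant.

Variables (v : R -> R) (D : R).
Hypothesis v_standing : standing v.
Hypothesis v_doubling : doubling v D.

Lemma standing_ge_1 (x : R) : 0 <= x < 1 -> 1 <= v x.
Proof. apply v_standing. Qed.

Lemma standing_le (x y : R) : 0 <= x <= y -> y < 1 -> v x <= v y.
Proof.
  intros Hxy Hy; destruct (Req_dec x y) as [->|Hne]; [lra|].
  left; apply (proj1 (proj2 v_standing)); lra.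
Qed.

Lemma inv_standing_le (x y : R) : 0 <= x <= y -> y < 1 -> / v y <= / v x.
Proof.
  intros Hxy Hy; pose proof (standing_ge_1 x ltac:(lra)).
  apply Rinv_le_contravar; [lra|apply standing_le; lra].
Qed.

Lemma doubling_const_ge_1 : 1 <= D.
Proof.
  pose proof (v_doubling (1/2) ltac:(lra)) as Hd.
  replace (1 - 2 * (1/2)) with 0 in Hd by field.
  rewrite (proj1 (proj2 (proj2 (proj2 v_standing)))) in Hd.
  pose proof (standing_ge_1 (1 - 1/2) ltac:(lra)); lra.
Qed.

Lemma doubling_le (x y : R) :
  1/2 <= x <= y -> y < 1 -> y - x <= 1 - y -> v y <= D * v x.
Proof.
  intros Hxy Hy Hgap.
  pose proof (v_doubling (1 - y) ltac:(lra)) as Hd.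
  replace (1 - (1 - y)) with y in Hd by ring.
  pose proof (standing_le (1 - 2 * (1 - y)) x ltac:(lra) ltac:(lra)).
  pose proof doubling_const_ge_1.
  nra.
Qed.

Variable n : nat.
Hypothesis n_pos : (1 <= n)%nat.

Lemma inv_dyadic_point_le (k : nat) :
  / v (dyadic_point n k) <= D ^ k * / v (dyadic_point n 0).
Proof.
  induction k as [|k IH]; [simpl; lra|].
  pose proof (dyadic_point_range n n_pos k); pose proof (dyadic_point_range n n_pos (S k)).
  pose proof (dyadic_point_S_le n n_pos k).
  pose proof (standing_ge_1 (dyadic_point n (S k)) ltac:(lra)).
  assert (Hv : v (dyadic_point n k) <= D * v (dyadic_point n (S k)))
    by (apply doubling_le; [lra|lra|apply dyadic_point_gap; exact n_pos]).
  assert (/ v (dyadic_point n (S k)) <= D * / v (dyadic_point n k)).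
  { pose proof (standing_ge_1 (dyadic_point n k) ltac:(lra)).
    apply (Rmult_le_reg_l (v (dyadic_point n (S k)) * v (dyadic_point n k))); [nra|].
    field_simplify; lra. }
  pose proof doubling_const_ge_1.
  simpl pow; nra.
Qed.

Lemma dyadic_block_le (m k : nat) : (1 <= m)%nat -> 2 * D <= INR m ->
  dyadic_point n k ^ n * (/ v (dyadic_point n (S k)) - / v (dyadic_point n k))
    <= D * INR m ^ m * (1/2) ^ k * / v (dyadic_point n 0).
Proof.
  intros Hm HmD.
  pose proof (dyadic_point_range n n_pos k) as Hk.
  pose proof (dyadic_point_range n n_pos (S k)) as HSk.
  pose proof (dyadic_point_S_le n n_pos k).
  pose proof doubling_const_ge_1.
  assert (Hh0 : 0 < / v (dyadic_point n 0)).
  { pose proof (dyadic_point_range n n_pos 0).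
    apply Rinv_0_lt_compat; pose proof (standing_ge_1 (dyadic_point n 0) ltac:(lra)); lra. }
  assert (Hhalf : 0 < (1/2) ^ k) by (apply pow_lt; lra).
  assert (Hmm : 0 <= INR m ^ m) by (apply pow_le, pos_INR).
  assert (Hinc : 0 <= / v (dyadic_point n (S k)) - / v (dyadic_point n k))
    by (pose proof (inv_standing_le (dyadic_point n (S k)) (dyadic_point n k)); lra).
  assert (Hn : 0 < INR n) by (apply lt_0_INR; lia).
  destruct (Rle_dec (1/2) (1 - 2 ^ k / INR n)) as [Hcut|Hcut].
  2:{ assert (dyadic_point n k = 1/2)
        by (unfold dyadic_point; apply Rmax_left; lra).
      replace (dyadic_point n (S k)) with (dyadic_point n k) by lra.
      rewrite Rminus_diag, Rmult_0_r.
      apply Rmult_le_pos; [|lra].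
      apply Rmult_le_pos; [apply Rmult_le_pos|]; lra. }
  assert (Hpow : dyadic_point n k ^ n <= exp (- 2 ^ k)).
  { unfold dyadic_point; rewrite Rmax_right by lra.
    apply pow_one_sub_div_le_exp; split; [left; apply pow_lt; lra|].
    assert (2 ^ k / INR n <= 1) by lra.
    apply (Rmult_le_reg_r (/ INR n)); [apply Rinv_0_lt_compat; lra|].
    rewrite Rinv_r by lra; exact H1. }
  assert (HDk : D ^ k <= INR m ^ k * (1/2) ^ k).
  { rewrite <- Rpow_mult_distr; apply pow_incr; lra. }
  pose proof (pow_le_pow_exp_pow2 m k Hm) as Hmk.
  pose proof (inv_dyadic_point_le (S k)) as HSk'; simpl pow in HSk'.
  assert (HE : exp (- 2 ^ k) * exp (2 ^ k) = 1)
    by (rewrite <- exp_plus, Rplus_opp_l; apply exp_0).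
  assert (0 <= D ^ k) by (apply pow_le; lra).
  assert (0 < exp (- 2 ^ k)) by apply exp_pos.
  assert (0 <= dyadic_point n k ^ n) by (apply pow_le; lra).
  set (h0 := / v (dyadic_point n 0)) in *.
  set (E := exp (- 2 ^ k)) in *.
  assert (Hvk : 0 < / v (dyadic_point n k))
    by (apply Rinv_0_lt_compat; pose proof (standing_ge_1 (dyadic_point n k) ltac:(lra)); lra).
  apply Rle_trans with (E * (D * D ^ k * h0)); [apply Rmult_le_compat; lra|].
  apply Rle_trans with (E * (D * (INR m ^ k * (1/2) ^ k) * h0)).
  { apply Rmult_le_compat_l; [lra|]; apply Rmult_le_compat_r; [lra|].
    apply Rmult_le_compat_l; lra. }
  apply Rle_trans with (E * (D * (INR m ^ m * exp (2 ^ k) * (1/2) ^ k) * h0)).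
  { apply Rmult_le_compat_l; [lra|]; apply Rmult_le_compat_r; [lra|].
    apply Rmult_le_compat_l; [lra|]; apply Rmult_le_compat_r; lra. }
  replace (E * (D * (INR m ^ m * exp (2 ^ k) * (1/2) ^ k) * h0))
    with ((E * exp (2 ^ k)) * (D * INR m ^ m * (1/2) ^ k * h0)) by ring.
  rewrite HE; lra.
Qed.

Lemma cn_integrand_increment_le (x y : R) : 1/2 <= x < y -> y < 1 -> y - x <= 1 - y ->
  cn_integrand v n x * (v y - v x) <= D * (x ^ n * (/ v x - / v y)).
Proof.
  intros Hxy Hy Hgap; unfold cn_integrand.
  pose proof (standing_ge_1 x ltac:(lra)); pose proof (standing_ge_1 y ltac:(lra)).
  pose proof (standing_le x y ltac:(lra) Hy).
  pose proof (doubling_le x y ltac:(lra) Hy Hgap).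
  assert (Hxn : 0 <= x ^ n) by (apply pow_le; lra).
  replace (x ^ n / v x ^ 2 * (v y - v x))
    with (x ^ n * (v y - v x) * (v y / (v x ^ 2 * v y))) by (field; lra).
  replace (D * (x ^ n * (/ v x - / v y)))
    with (x ^ n * (v y - v x) * (D * v x / (v x ^ 2 * v y))) by (field; lra).
  apply Rmult_le_compat_l; [apply Rmult_le_pos; lra|].
  apply Rmult_le_compat_r; [|lra].
  left; apply Rinv_0_lt_compat, Rmult_lt_0_compat; [apply pow_lt|]; lra.
Qed.

Definition cn_majorant : R -> R :=
  step_majorant (fun r => r ^ n) (fun r => / v r) (dyadic_point n) n.

Let inv_v_antitone (x y : R) : 1/2 <= x <= y -> y < 1 -> / v y <= / v x.
Proof. intros; apply inv_standing_le; lra. Qed.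

Let pow_n_range (x : R) : 1/2 <= x < 1 -> 0 <= x ^ n <= 1.
Proof.
  intros; split; [apply pow_le; lra|].
  rewrite <- (pow1 n); apply pow_incr; lra.
Qed.

Let pow_n_monotone (x y : R) : 1/2 <= x <= y -> y < 1 -> x ^ n <= y ^ n.
Proof. intros; apply pow_incr; lra. Qed.

Lemma cn_majorant_increment (x y : R) : 1/2 <= x <= y -> y < 1 ->
  x ^ n * (/ v x - / v y) <= cn_majorant x - cn_majorant y.
Proof.
  intros Hxy Hy.
  pose proof (step_majorant_increment (1/2) 1 (fun r => r ^ n) (fun r => / v r)
    (dyadic_point n) (dyadic_point_S_le n n_pos) (dyadic_point_range n n_pos)
    inv_v_antitone pow_n_range pow_n_monotone n x y Hxy Hy) as Hinc.
  rewrite dyadic_point_n, !Rmax_left in Hinc by (exact n_pos || lra).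
  exact Hinc.
Qed.

Lemma cn_majorant_nonneg (x : R) : 1/2 <= x < 1 -> 0 <= cn_majorant x.
Proof.
  apply (step_majorant_nonneg (1/2) 1); auto using dyadic_point_S_le, dyadic_point_range.
  intros r Hr; left; apply Rinv_0_lt_compat.
  pose proof (standing_ge_1 r ltac:(lra)); lra.
Qed.

Lemma cn_majorant_half_le (m : nat) : (1 <= m)%nat -> 2 * D <= INR m ->
  cn_majorant (1/2) <= (1 + 2 * D * INR m ^ m) * / v (dyadic_point n 0).
Proof.
  intros Hm HmD.
  pose proof (step_majorant_lo_le (1/2) 1 (fun r => r ^ n) (fun r => / v r)
    (dyadic_point n) (dyadic_point_S_le n n_pos) (dyadic_point_range n n_pos)
    inv_v_antitone pow_n_range (D * INR m ^ m * / v (dyadic_point n 0)) n) as Hlo.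
  unfold cn_majorant.
  eapply Rle_trans; [apply Hlo|lra].
  intros k; pose proof (dyadic_block_le m k Hm HmD); lra.
Qed.

Lemma cn_proper_le (c I : R) : 1/2 < c < 1 ->
  RS_integral (cn_integrand v n) v (1/2) c I -> I <= D * cn_majorant (1/2).
Proof.
  intros Hc HI.
  pose proof (RS_integral_le_potential (cn_integrand v n) v (fun r => D * cn_majorant r)
    (1/2) c (1 - c) I ltac:(lra) ltac:(lra)) as Hpot.
  pose proof (cn_majorant_nonneg c ltac:(lra)).
  pose proof doubling_const_ge_1.
  assert (I <= D * cn_majorant (1/2) - D * cn_majorant c); [|nra].
  apply Hpot; [|exact HI].
  intros x y Hx Hxy Hy Hgap.
  rewrite <- Rmult_minus_distr_l.
  eapply Rle_trans; [apply cn_integrand_increment_le; lra|].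
  apply Rmult_le_compat_l; [lra|].
  apply cn_majorant_increment; lra.
Qed.

End CnMajorant.

Theorem mainTheorem10 :
  forall D : R, 1 <= D ->
  exists (C : R) (n0 : nat),
    forall v : R -> R, standing v -> doubling v D ->
    forall (n : nat), (1 <= n)%nat -> (n0 <= n)%nat ->
    forall cn : R, RS_improper (cn_integrand v n) v (1/2) 1 cn ->
    cn <= C / gfun v (INR n).
Proof.
  intros D HD.
  destruct (INR_archimed 1 (2 * D) ltac:(lra)) as [m Hm]; rewrite Rmult_1_r in Hm.
  assert (Hm1 : (1 <= m)%nat) by (destruct m; [simpl in Hm|]; lia || lra).
  exists (D * (1 + 2 * D * INR m ^ m)), 2%nat.
  intros v Hs Hd n Hn1 Hn2 cn Hcn.
  unfold Rdiv, gfun; rewrite <- dyadic_point_O by exact Hn2.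
  apply (RS_improper_le (cn_integrand v n) v (1/2) 1 cn); [lra|exact Hcn|].
  intros c I Hc HI.
  eapply Rle_trans; [exact (cn_proper_le v D Hs Hd n Hn1 c I Hc HI)|].
  rewrite Rmult_assoc; apply Rmult_le_compat_l; [lra|].
  exact (cn_majorant_half_le v D Hs Hd n Hn1 m Hm1 ltac:(lra)).
Qed.
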